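(* Let $m>0$ be a fixed integer and let $S$ be a monoid such that (i) $S$ satisfies $x^m\,y_1^2y_2^2\cdots y_n^2\,x\approx x^{m+1}\,y_1^2y_2^2\cdots y_n^2\,x$ for each $n>1$; (ii) for each $0<d<m+1$ and every identity $x^{m+1-d}tx^d\approx\mathbf v$ satisfied by $S$, the variable $x$ occurs exactly $m+1$ times in $\mathbf v$; (iii) for all $p,c>1$, every word $\mathbf w$ such that $S$ satisfies $x^py^c\approx\mathbf w$ is of the form $x^iy^j$ for some $i,j>1$. Then $S$ is non-finitely based.
   Context: All letters denote distinct variables of a countably infinite alphabet; words are elements of the free semigroup on it. A monoid $S$ satisfies an identity $\mathbf u\approx\mathbf v$ if both sides are equal under every evaluation of the variables in $S$. $S$ is finitely based if all its identities are derivable from a finite subset of them; otherwise non-finitely based. *)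

From mathcomp Require Import all_boot.
Set Implicit Arguments. Unset Strict Implicit. Unset Printing Implicit Defensive.

Record monoid := Monoid {
  carrier :> Type;
  mop : carrier -> carrier -> carrier;
  mone : carrier;
  mopA : forall a b c, mop a (mop b c) = mop (mop a b) c;
  mone_l : forall a, mop mone a = a;
  mone_r : forall a, mop a mone = a }.

Definition word := seq nat.
Definition identity := (word * word)%type.

Definition eval (S : monoid) (phi : nat -> S) (w : word) : S :=
  foldr (fun x acc => mop (phi x) acc) (mone S) w.

Definition satisfies (S : monoid) (u v : word) : Prop :=
  forall phi : nat -> S, eval phi u = eval phi v.

Definition subst (sigma : nat -> word) (w : word) : word :=
  flatten (map sigma w).

Inductive derivable (Sigma : seq identity) : word -> word -> Prop :=
  | der_refl u : derivable Sigma u u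
  | der_sym u v : derivable Sigma u v -> derivable Sigma v u
  | der_trans u v w : derivable Sigma u v -> derivable Sigma v w -> derivable Sigma u w
  | der_step (e : identity) (sigma : nat -> word) (a b : word) :
      e \in Sigma ->
      derivable Sigma (a ++ subst sigma e.1 ++ b) (a ++ subst sigma e.2 ++ b).

Definition finitely_based (S : monoid) : Prop :=
  exists Sigma : seq identity,
    (forall e, e \in Sigma -> satisfies S e.1 e.2) /\
    (forall u v : word, satisfies S u v -> derivable Sigma u v).

Definition non_finitely_based (S : monoid) : Prop := ~ finitely_based S.

(* y_1^2 y_2^2 ... y_n^2, with y_i the variable i (x is variable 0). *)
Definition ysq (n : nat) : word := flatten [seq [:: i; i] | i <- iota 1 n].

From mathcomp Require Import all_boot zify.
Set Implicit Arguments. Unset Strict Implicit. Unset Printing Implicit Defensive.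

(* Suppose S had a finite basis Sigma and let n exceed by 2 the length of every
   identity in Sigma.  Call a word good when x occurs m+1 times, the letters
   y_1, ..., y_n are ordered (every y_a precedes every y_b for a < b), and each
   y_l is interleaved with x (some x precedes some y_l and some y_l precedes
   some x).  Condition (iii) forces every identity of S to preserve which of two
   letters comes first, so orderedness and interleaving survive a derivation
   step.  If a good word is an instance of the short side u of an identity
   u ~ v, some y_l occurs in the image of only one letter of u, flanked by x's,
   and condition (ii) then shows that x occurs m+1 times in the matching
   instance of v.  Hence good words are closed under derivation from Sigma; but
   x^m y_1^2 ... y_n^2 x is good while x^(m+1) y_1^2 ... y_n^2 x is not,
   although (i) makes them equal in S. *)

Section Evaluation.
Variable S : monoid.

Lemma eval_cat (phi : nat -> S) s t : eval phi (s ++ t) = mop (eval phi s) (eval phi t).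
Proof. by elim: s => [|x s IH] /=; rewrite ?mone_l // IH mopA. Qed.

Lemma eval_subst (phi : nat -> S) sg s :
  eval phi (subst sg s) = eval (fun z => eval phi (sg z)) s.
Proof. by elim: s => [|x s IH] //=; rewrite eval_cat IH. Qed.

Lemma satisfies_sym u v : satisfies S u v -> satisfies S v u.
Proof. by move=> uv phi; rewrite uv. Qed.

Lemma satisfies_cat u v u' v' :
  satisfies S u v -> satisfies S u' v' -> satisfies S (u ++ u') (v ++ v').
Proof. by move=> uv uv' phi; rewrite !eval_cat uv uv'. Qed.

Lemma satisfies_subst sg u v : satisfies S u v -> satisfies S (subst sg u) (subst sg v).
Proof. by move=> uv phi; rewrite !eval_subst uv. Qed.

End Evaluation.

Lemma subst_cons sg z s : subst sg (z :: s) = sg z ++ subst sg s.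
Proof. by []. Qed.

Lemma subst_cat sg s t : subst sg (s ++ t) = subst sg s ++ subst sg t.
Proof. by rewrite /subst map_cat flatten_cat. Qed.

Lemma mem_subst sg s c : (c \in subst sg s) = has (fun z => c \in sg z) s.
Proof. by elim: s => [|z s IH] //=; rewrite mem_cat IH. Qed.

Lemma count_subst (P : pred nat) sg s :
  count P (subst sg s) = sumn [seq count P (sg z) | z <- s].
Proof. by rewrite /subst count_flatten -map_comp. Qed.

Lemma eq_in_subst sg1 sg2 s : {in s, sg1 =1 sg2} -> subst sg1 s = subst sg2 s.
Proof. by move=> eq_sg; rewrite /subst; congr flatten; apply/eq_in_map. Qed.

Lemma subst_nseq_count c sg s :
  subst (fun z => nseq (count_mem c (sg z)) c) s = nseq (count_mem c (subst sg s)) c.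
Proof. by elim: s => [|z s IH] //; rewrite !subst_cons IH count_cat nseqD. Qed.

Lemma context_as_subst (u v a b : word) sg : exists tau A B,
  subst tau (A :: u ++ [:: B]) = a ++ subst sg u ++ b /\
  subst tau (A :: v ++ [:: B]) = a ++ subst sg v ++ b.
Proof.
pose A := (\max_(z <- u ++ v) z).+1.
pose tau z := if z == A then a else if z == A.+1 then b else sg z.
have framed s : {subset s <= u ++ v} ->
    subst tau (A :: s ++ [:: A.+1]) = a ++ subst sg s ++ b.
  move=> sub_s; rewrite subst_cons subst_cat subst_cons /tau eqxx (gtn_eqF (ltnSn A)) eqxx cats0.
  congr (_ ++ _ ++ _); apply: eq_in_subst => z /sub_s z_uv.
  have z_le := @leq_bigmax_seq _ (u ++ v) xpredT id z z_uv isT.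
  by rewrite !ltn_eqF // ltnW.
by exists tau, A, A.+1; split; apply: framed => z z_s; rewrite mem_cat z_s ?orbT.
Qed.

Section SeqFacts.
Variable T : eqType.
Implicit Types (x : T) (s p q r t : seq T).

Lemma mem_take_nth x0 s i j : j < i -> j < size s -> nth x0 s j \in take i s.
Proof. by move=> ji js; rewrite -(nth_take x0 ji) mem_nth // size_take_min; lia. Qed.

Lemma mem_drop_nth x0 s i j : i <= j < size s -> nth x0 s j \in drop i s.
Proof. by case/andP=> ij js; rewrite -(subnKC ij) -nth_drop mem_nth // size_drop; lia. Qed.

Lemma split_at_nth x0 s i :
  i < size s -> s = take i s ++ nth x0 s i :: drop i.+1 s.
Proof. by move=> lt_is; rewrite -(drop_nth x0 lt_is) cat_take_drop. Qed.

Lemma cat_cons_prefix x s r p q :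
  s ++ r = p ++ x :: q -> x \notin s -> exists2 t, p = s ++ t & r = t ++ x :: q.
Proof.
move=> E xs; have le_sp : size s <= size p.
  rewrite leqNgt; apply: contra xs => lt_ps.
  have : nth x (s ++ r) (size p) \in s by rewrite nth_cat lt_ps mem_nth.
  by rewrite E nth_cat ltnn subnn.
move: E; rewrite -{1}(cat_take_drop (size s) p) -catA => /eqP.
rewrite eqseq_cat ?size_takel // => /andP[/eqP take_p /eqP r_eq].
by exists (drop (size s) p); rewrite // {1}take_p cat_take_drop.
Qed.

Lemma cat3_cons_split x s1 t s2 p q :
  s1 ++ t ++ s2 = p ++ x :: q -> x \notin s1 -> x \notin s2 ->
  exists t1 t2, [/\ t = t1 ++ x :: t2, p = s1 ++ t1 & q = t2 ++ s2].
Proof.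
move=> E x1 x2; have [t1 -> E'] := cat_cons_prefix E x1.
have := congr1 rev E'; rewrite !rev_cat rev_cons cat_rcons.
move/cat_cons_prefix; rewrite mem_rev => /(_ x2)[t2 Eq Et].
exists t1, (rev t2); split => //.
  by rewrite -[t]revK Et rev_cat rev_cons revK cat_rcons.
by rewrite -[q]revK Eq rev_cat revK.
Qed.

Lemma count_eq1_split (P : pred T) s : count P s = 1 ->
  exists s1 x s2, [/\ s = s1 ++ x :: s2, P x, ~~ has P s1 & ~~ has P s2].
Proof.
elim: s => [|y s IH] //=; case: (boolP (P y)) => Py c1.
  by exists [::], y, s; split => //; rewrite has_count; lia.
have /IH[s1 [x [s2 [-> Px n1 n2]]]] : count P s = 1 by lia.
by exists (y :: s1), x, s2; rewrite /= (negbTE Py).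
Qed.

End SeqFacts.

Definition before (a b : nat) (w : word) := a \notin drop (index b w) w.

Lemma before_notinl (a b : nat) w : a \notin w -> before a b w.
Proof. by apply: contra => /mem_drop. Qed.

Lemma before_notinr (a b : nat) w : b \notin w -> before a b w.
Proof. by move/memNindex; rewrite /before => ->; rewrite drop_size. Qed.

Lemma before_cat (a b : nat) s t : before a b (s ++ t) =
  if b \in s then before a b s && (a \notin t) else before a b t.
Proof.
rewrite /before index_cat; case: ifP => bs.
  by rewrite drop_cat index_mem bs mem_cat negb_or.
by rewrite drop_cat ltnNge leq_addr /= addKn.
Qed.

Lemma before_cat_mem (a b : nat) s t : before a b (s ++ t) -> b \in s -> a \notin t.
Proof. by rewrite before_cat => + bs; rewrite bs => /andP[]. Qed.

Lemma before_catr (a b : nat) s t : before a b (s ++ t) -> before a b t.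
Proof.
by rewrite before_cat; case: ifP => // _ /andP[_ /before_notinl].
Qed.

Lemma not_before_cat (a b : nat) w : a != b -> ~~ before a b w ->
  exists s t, [/\ w = s ++ t, b \in s & a \in t].
Proof.
move=> ab; rewrite /before negbK => a_drop.
have bw : b \in w by apply: contraLR a_drop => /memNindex ->; rewrite drop_size.
exists (take (index b w).+1 w), (drop (index b w).+1 w); split.
- by rewrite cat_take_drop.
- by rewrite in_take.
- by move: a_drop; rewrite (drop_nth 0) ?index_mem // nth_index // inE (negbTE ab).
Qed.

Lemma before_nth (a b : nat) w i j : before a b w ->
  i < size w -> nth 0 w i = a -> nth 0 w j = b -> i < j.
Proof.
move=> abw iw wi wj; rewrite ltnNge; apply: contra abw => ji.
have bj : index b w <= j.
  by rewrite leqNgt; apply/negP => /(before_find 0); rewrite /= wj eqxx.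
by rewrite -wi mem_drop_nth // iw (leq_trans bj).
Qed.

Lemma not_before_nth (a b : nat) w : a != b -> ~~ before a b w ->
  exists i j, [/\ j < i < size w, nth 0 w i = a & nth 0 w j = b].
Proof.
move=> ab /(not_before_cat ab)[s [t [-> bs at']]].
exists (size s + index a t), (index b s); split.
- by rewrite size_cat ltn_add2l index_mem at' (leq_trans _ (leq_addr _ _)) ?index_mem.
- by rewrite nth_cat ltnNge leq_addr /= addKn nth_index.
- by rewrite nth_cat index_mem bs nth_index.
Qed.

Definition ordered (w : word) := forall a b, 0 < a < b -> before a b w.

Definition interleaved (a b : nat) (w : word) := ~~ before a b w && ~~ before b a w.

Lemma ordered_catr s t : ordered (s ++ t) -> ordered t.
Proof. by move=> ord_st a b ab; apply: before_catr (ord_st a b ab). Qed.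

Lemma interleaved_memr (a b : nat) w : interleaved a b w -> b \in w.
Proof. by case/andP=> nab _; apply: contraR nab; apply: before_notinr. Qed.

Lemma ordered_shared_le1 n s t : ordered (s ++ t) ->
  count (fun l => (l \in s) && (l \in t)) (iota 1 n) <= 1.
Proof.
move=> ord_st; rewrite -size_filter; set P := fun l => (l \in s) && (l \in t).
have no_pair x y : 0 < x < y -> y \in s -> x \notin t.
  by move=> xy; apply: before_cat_mem (ord_st x y xy).
have uniq_P : uniq (filter P (iota 1 n)) by rewrite filter_uniq ?iota_uniq.
case E: (filter P (iota 1 n)) uniq_P => [//|l r] uniq_lr.
apply: (uniq_leq_size (s2 := [:: l])) uniq_lr _ => k k_lr; rewrite inE.
have : k \in filter P (iota 1 n) by rewrite E.
have : l \in filter P (iota 1 n) by rewrite E mem_head.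
rewrite !mem_filter !mem_iota => /and3P[/andP[ls lt] l0 _] /and3P[/andP[ks kt] k0 _].
case: ltngtP => // [kl|lk].
- by have := no_pair k l; rewrite k0 kl ls kt => /(_ isT isT).
- by have := no_pair l k; rewrite l0 lk ks lt => /(_ isT isT).
Qed.

Lemma count_shared_letters n sg u : ordered (subst sg u) ->
  count (fun l => 1 < count (fun z => l \in sg z) u) (iota 1 n) <= (size u).-1.
Proof.
elim: u => [|z u IH] ord_u; first by elim: (iota 1 n).
case: u IH ord_u => [|z' u] IH; rewrite subst_cons => ord_u.
  by rewrite (@eq_count _ _ pred0) ?count_pred0 // => l /=; case: (l \in sg z).
apply: leq_trans (leq_add (ordered_shared_le1 n ord_u) (IH (ordered_catr ord_u))).
rewrite -count_predUI; apply: leq_trans (leq_addr _ _); apply: sub_count => l /=.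
by rewrite mem_subst has_count; case: (l \in sg z) => /=; lia.
Qed.

Lemma exists_unique_owner n sg u : 0 < n -> size u <= n -> ordered (subst sg u) ->
  (forall l, 0 < l <= n -> l \in subst sg u) ->
  exists2 l, 0 < l <= n & count (fun z => l \in sg z) u = 1.
Proof.
move=> n_gt0 size_u ord_u mem_u.
have : ~~ all (fun l => 1 < count (fun z => l \in sg z) u) (iota 1 n).
  rewrite all_count size_iota; apply: contraTneq (count_shared_letters n ord_u) => ->; lia.
rewrite -has_predC => /hasP[l]; rewrite mem_iota /= -leqNgt => l_range le1.
have l_range' : 0 < l <= n by lia.
exists l => //; have := mem_u l l_range'; rewrite mem_subst has_count.
by move=> c_gt0; apply/eqP; rewrite eqn_leq le1.
Qed.

Lemma interleaved_split n l w : 1 < n -> 0 < l <= n -> ordered w ->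
  (forall k, 0 < k <= n -> interleaved 0 k w) ->
  exists p q, [/\ w = p ++ l :: q, 0 \in p & 0 \in q].
Proof.
move=> n_gt1 l_range ord_w inter_w.
have l_neq0 : l != 0 by lia.
have neq0_l : 0 != l by rewrite eq_sym.
have split_at i : i < size w -> nth 0 w i = l -> 0 \in take i w -> 0 \in drop i.+1 w ->
    exists p q, [/\ w = p ++ l :: q, 0 \in p & 0 \in q].
  by move=> iw wi p0 q0; exists (take i w), (drop i.+1 w); rewrite -wi -split_at_nth.
case/andP: (inter_w l l_range).
move=> /(not_before_nth neq0_l) [z2 [i2 [/andP[i2z2 z2w] wz2 wi2]]].
move=> /(not_before_nth l_neq0) [i1 [z1 [/andP[z1i1 i1w] wi1 wz1]]].
have [q0|q0] := boolP (0 \in drop i1.+1 w).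
  by apply: (split_at i1) => //; rewrite -wz1 mem_take_nth // (ltn_trans z1i1).
have [p0|p0] := boolP (0 \in take i2 w).
  by apply: (split_at i2); rewrite ?(ltn_trans i2z2) // -wz2 mem_drop_nth // i2z2.
have zeros_inside j : j < size w -> nth 0 w j = 0 -> i2 < j <= i1.
  move=> jw wj; have j_i2 : j != i2 by apply/eqP => ji; move: l_neq0; rewrite -wi2 -ji wj.
  have : ~~ (j < i2) by apply: contra p0 => ji; rewrite -wj mem_take_nth.
  have : ~~ (i1 < j) by apply: contra q0 => ij; rewrite -wj mem_drop_nth ?ij.
  lia.
(* Now every x lies between the occurrences i2 < i1 of y_l; another letter y_k
   interleaved with x would then occur both after i2 and before i1, against
   the order of y_k and y_l. *)
pose k := if l == 1 then 2 else 1.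
have k_range : 0 < k <= n by rewrite /k; case: ifP => /eqP; lia.
have kl : k != l by rewrite /k; case: ifP => /eqP; lia.
have k_neq0 : k != 0 by lia.
have neq0_k : 0 != k by rewrite eq_sym.
case/andP: (inter_w k k_range).
move=> /(not_before_nth neq0_k) [za [ka [/andP[ka_za za_w] wza wka]]].
move=> /(not_before_nth k_neq0) [kb [zb [/andP[zb_kb kb_w] wkb wzb]]].
have := zeros_inside za za_w wza; have := zeros_inside zb (ltn_trans zb_kb kb_w) wzb.
case: (ltngtP k l) kl => // [k_l|l_k] _.
- have : kb < i2 by apply: before_nth (ord_w k l _) kb_w wkb wi2; lia.
  lia.
- have : i1 < ka by apply: before_nth (ord_w l k _) i1w wi1 wka; lia.
  lia.
Qed.

Definition good (m n : nat) (w : word) :=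
  [/\ count_mem 0 w = m.+1, ordered w & forall l, 0 < l <= n -> interleaved 0 l w].

Section IdentitiesOfS.
Variables (m : nat) (S : monoid).

Hypothesis x_count : forall d, 0 < d < m.+1 -> forall v : word,
  satisfies S (nseq (m.+1 - d) 0 ++ [:: 1] ++ nseq d 0) v -> count_mem 0 v = m.+1.

Hypothesis xy_shape : forall p c, 1 < p -> 1 < c -> forall w : word,
  satisfies S (nseq p 0 ++ nseq c 1) w ->
  exists i j, [/\ 1 < i, 1 < j & w = nseq i 0 ++ nseq j 1].

(* Substituting x x for a, y y for b and the empty word for every other letter,
   then padding with x x on the left and y y on the right, turns U into x^p y^c
   with p, c > 1; by (iii) the image of V has the same shape. *)
Lemma satisfies_before U V (a b : nat) :
  a != b -> satisfies S U V -> before a b U -> before a b V.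
Proof.
move=> ab UV abU; apply: contraT => /(not_before_cat ab)[s [t [EV bs at']]].
pose th z := if z == a then [:: 0; 0] else if z == b then [:: 1; 1] else [::].
have zeros s' : b \notin s' -> all (pred1 0) (subst th s').
  move=> bs'; apply/allP => c; rewrite mem_subst => /hasP[z zs]; rewrite /th.
  case: ifP => _; first by rewrite !inE orbb.
  by case: ifP => // /eqP zb; rewrite -zb zs in bs'.
have ones s' : a \notin s' -> all (pred1 1) (subst th s').
  move=> as'; apply/allP => c; rewrite mem_subst => /hasP[z zs]; rewrite /th.
  case: ifP => [/eqP za|_]; first by rewrite -za zs in as'.
  by case: ifP => _; rewrite ?inE ?orbb.
set U1 := take (index b U) U; set U2 := drop (index b U) U.
have bU1 : b \notin U1 by apply/negP => /index_ltn; rewrite ltnn.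
have U_shape : [:: 0; 0] ++ subst th U ++ [:: 1; 1] =
    nseq (size (subst th U1)).+2 0 ++ nseq (size (subst th U2) + 2) 1.
  rewrite -(cat_take_drop (index b U) U) subst_cat -/U1 -/U2.
  by rewrite {1}(all_pred1P _ _ (zeros _ bU1)) {1}(all_pred1P _ _ (ones _ abU)) nseqD -!catA.
have sat_th : satisfies S ([:: 0; 0] ++ subst th U ++ [:: 1; 1])
                          ([:: 0; 0] ++ subst th V ++ [:: 1; 1]).
  by apply: satisfies_cat (fun _ => erefl) (satisfies_cat (satisfies_subst th UV) (fun _ => erefl)).
rewrite U_shape in sat_th.
have [i [j [_ _ EVw]]] := xy_shape (isT : 1 < _.+2) (ltn_addl _ (isT : 1 < 2)) sat_th.
have : before 0 1 (nseq i 0 ++ nseq j 1).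
  by rewrite before_cat mem_nseq andbF before_notinl // mem_nseq andbF.
have one_s : 1 \in [:: 0; 0] ++ subst th s.
  rewrite mem_cat mem_subst; apply/orP; right; apply/hasP; exists b => //.
  by rewrite /th (eq_sym b a) (negbTE ab) eqxx mem_head.
have zero_t : 0 \in subst th t ++ [:: 1; 1].
  rewrite mem_cat mem_subst; apply/orP; left; apply/hasP; exists a => //.
  by rewrite /th eqxx mem_head.
rewrite -EVw EV subst_cat -catA catA => /before_cat_mem/(_ one_s).
by rewrite zero_t.
Qed.

Lemma satisfies_ordered U V : satisfies S U V -> ordered U -> ordered V.
Proof. by move=> UV ord_U a b ab; apply: satisfies_before UV (ord_U a b ab); lia. Qed.

Lemma satisfies_interleaved U V (a b : nat) :
  a != b -> satisfies S U V -> interleaved a b U -> interleaved a b V.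
Proof.
move=> ab /satisfies_sym VU /andP[nab nba]; apply/andP; split.
  by apply: contra nab; apply: satisfies_before VU.
by apply: contra nba; apply: satisfies_before VU; rewrite eq_sym.
Qed.

(* Some y_l lies in the image of a single letter z of u, flanked by x's; sending
   z to x^p t x^q and every other letter to its number of x's reduces u ~ v to
   an instance of (ii). *)
Lemma good_count_subst n u v sg : 1 < n -> size u <= n -> satisfies S u v ->
  good m n (subst sg u) -> count_mem 0 (subst sg v) = m.+1.
Proof.
move=> n_gt1 size_u uv [count_w ord_w inter_w].
have mem_w l : 0 < l <= n -> l \in subst sg u by move/inter_w/interleaved_memr.
have [l l_range /count_eq1_split[u1 [z [u2 [Eu l_z no_l1 no_l2]]]]] :=
  exists_unique_owner (ltnW n_gt1) size_u ord_w mem_w.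
have l0 : l != 0 by lia.
have [p [q [w_split p0 q0]]] := interleaved_split n_gt1 l_range ord_w inter_w.
move: w_split; rewrite Eu subst_cat subst_cons => /cat3_cons_split.
rewrite !mem_subst => /(_ no_l1 no_l2)[t1 [t2 [sg_z Ep Eq]]].
have z_u1 : z \notin u1 by apply: contra no_l1 => z_u1; apply/hasP; exists z.
have z_u2 : z \notin u2 by apply: contra no_l2 => z_u2; apply/hasP; exists z.
pose rho y := if y == z then nseq (count_mem 0 t1) 0 ++ 1 :: nseq (count_mem 0 t2) 0
              else nseq (count_mem 0 (sg y)) 0.
have rho_other s : z \notin s -> subst rho s = nseq (count_mem 0 (subst sg s)) 0.
  move=> zs; rewrite -subst_nseq_count; apply: eq_in_subst => y ys; rewrite /rho.
  by case: eqP => // yz; rewrite -yz ys in zs.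
have rho_u : subst rho u = nseq (count_mem 0 p) 0 ++ [:: 1] ++ nseq (count_mem 0 q) 0.
  by rewrite Eu subst_cat subst_cons !rho_other // /rho eqxx Ep Eq !count_cat !nseqD -!catA.
have count_pq : count_mem 0 p + count_mem 0 q = m.+1.
  by rewrite -count_w Eu subst_cat subst_cons sg_z Ep Eq !count_cat /= (negbTE l0); lia.
have d_range : 0 < count_mem 0 q < m.+1.
  by move: p0 q0; rewrite -count_pq -!has_pred1 !has_count; lia.
have sat_rho : satisfies S (nseq (m.+1 - count_mem 0 q) 0 ++ [:: 1] ++ nseq (count_mem 0 q) 0)
                           (subst rho v).
  by rewrite -count_pq addnK -rho_u; apply: satisfies_subst.
rewrite -(x_count d_range sat_rho) !count_subst; congr sumn; apply: eq_map => y.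
rewrite /rho; have [->|_] := eqVneq y z; last by rewrite count_nseq mul1n.
by rewrite sg_z !count_cat /= !count_nseq /= (negbTE l0) !mul1n.
Qed.

Lemma good_count_context n u v sg a b : 1 < n -> (size u).+2 <= n -> satisfies S u v ->
  good m n (a ++ subst sg u ++ b) -> count_mem 0 (a ++ subst sg v ++ b) = m.+1.
Proof.
move=> n_gt1 size_u uv; have [tau [A [B [<- <-]]]] := context_as_subst u v a b sg.
apply: good_count_subst n_gt1 _ _; first by rewrite /= size_cat addn1.
exact: (@satisfies_cat S [:: A] [:: A]) (fun _ => erefl) (satisfies_cat uv (fun _ => erefl)).
Qed.

Lemma good_step n u v sg a b : 1 < n -> (size u).+2 <= n -> satisfies S u v ->
  good m n (a ++ subst sg u ++ b) -> good m n (a ++ subst sg v ++ b).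
Proof.
move=> n_gt1 size_u uv good_w; have [_ ord_w inter_w] := good_w.
have w_uv : satisfies S (a ++ subst sg u ++ b) (a ++ subst sg v ++ b).
  by apply: satisfies_cat (fun _ => erefl) (satisfies_cat (satisfies_subst sg uv) (fun _ => erefl)).
split.
- exact: good_count_context good_w.
- exact: satisfies_ordered w_uv ord_w.
- by move=> l l_range; apply: satisfies_interleaved w_uv (inter_w l l_range); lia.
Qed.

Lemma derivable_good n Sigma u v : 1 < n ->
  (forall e, e \in Sigma ->
     [/\ satisfies S e.1 e.2, (size e.1).+2 <= n & (size e.2).+2 <= n]) ->
  derivable Sigma u v -> good m n u <-> good m n v.
Proof.
move=> n_gt1 Sigma_ok.
elim=> {u v} [u | u v _ IH | u v w _ IH1 _ IH2 | e sg a b /Sigma_ok[e_sat size1 size2]].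
- by [].
- exact: iff_sym IH.
- exact: iff_trans IH1 IH2.
- by split; apply: good_step => //; apply: satisfies_sym.
Qed.

End IdentitiesOfS.

Lemma ysqS n : ysq n.+1 = ysq n ++ [:: n.+1; n.+1].
Proof. by rewrite /ysq -[n.+1]addn1 iotaD map_cat flatten_cat /= addnC. Qed.

Lemma mem_ysq n c : (c \in ysq n) = (0 < c <= n).
Proof.
elim: n => [|n IH]; first by rewrite /ysq /=; case: c => [|[]].
by rewrite ysqS mem_cat IH !inE orbb; lia.
Qed.

Lemma ordered_ysq n : ordered (ysq n).
Proof.
elim: n => [|n IH] a b ab; first by apply: before_notinr; rewrite mem_ysq; lia.
rewrite ysqS before_cat mem_ysq; case: ifPn => b_le.
  by rewrite IH // !inE orbb; apply/eqP; lia.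
have [b_n | b_n] := eqVneq b n.+1; last by apply: before_notinr; rewrite !inE orbb.
by rewrite b_n /before /= eqxx /= !inE orbb; apply/eqP; lia.
Qed.

Lemma count0_x_ysq k n : count_mem 0 (nseq k 0 ++ ysq n ++ [:: 0]) = k.+1.
Proof.
rewrite !count_cat count_nseq mul1n.
have /count_memPn -> : 0 \notin ysq n by rewrite mem_ysq.
by rewrite /= addn1.
Qed.

Lemma good_x_ysq m n : 0 < m -> good m n (nseq m 0 ++ ysq n ++ [:: 0]).
Proof.
move=> m_gt0; split; first exact: count0_x_ysq.
  move=> a b ab; have b_x : b \notin nseq m 0 by rewrite mem_nseq; apply/nandP; right; apply/eqP; lia.
  rewrite before_cat (negbTE b_x) before_cat; case: ifPn => [_|b_y].
    by rewrite ordered_ysq // inE; apply/eqP; lia.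
  by apply: before_notinr; rewrite inE; apply/eqP; lia.
move=> l l_range; have l_y : l \in ysq n by rewrite mem_ysq.
apply/andP; split.
  by rewrite catA before_cat mem_cat l_y orbT inE eqxx andbF.
by rewrite before_cat mem_nseq m_gt0 eqxx /= mem_cat l_y andbF.
Qed.

Theorem theorem7p2 (m : nat) (S : monoid) :
  0 < m ->
  (forall n, 1 < n ->
     satisfies S (nseq m 0 ++ ysq n ++ [:: 0])
                 (nseq m.+1 0 ++ ysq n ++ [:: 0])) ->
  (forall d, 0 < d < m.+1 -> forall v : word,
     satisfies S (nseq (m.+1 - d) 0 ++ [:: 1] ++ nseq d 0) v ->
     count_mem 0 v = m.+1) ->
  (forall p c, 1 < p -> 1 < c -> forall w : word,
     satisfies S (nseq p 0 ++ nseq c 1) w ->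
     exists i j, [/\ 1 < i, 1 < j & w = nseq i 0 ++ nseq j 1]) ->
  non_finitely_based S.
Proof.
move=> m_gt0 x_ysq x_count xy_shape [Sigma [Sigma_sat Sigma_complete]].
pose n := (\max_(e <- Sigma) (size e.1 + size e.2)).+2.
have n_gt1 : 1 < n by [].
have Sigma_ok e : e \in Sigma ->
    [/\ satisfies S e.1 e.2, (size e.1).+2 <= n & (size e.2).+2 <= n].
  move=> e_in; have e_le : size e.1 + size e.2 <= \max_(e <- Sigma) (size e.1 + size e.2).
    exact: (@leq_bigmax_seq _ Sigma xpredT (fun e => size e.1 + size e.2)).
  by split; [exact: Sigma_sat | rewrite /n; lia | rewrite /n; lia].
have [good_preserved _] :=
  derivable_good x_count xy_shape n_gt1 Sigma_ok (Sigma_complete _ _ (x_ysq n n_gt1)).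
have [count_x _ _] := good_preserved (good_x_ysq n m_gt0).
by rewrite count0_x_ysq in count_x; lia.
Qed.
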